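(* For $n\ge2$ and all $P,Q\in\Gamma_n$, $D_{TJ}(P\|Q)\le \frac23 D_{Th}(P\|Q)$.
   Context: $\Gamma_n=\{P=(p_1,\dots,p_n): p_i>0,\ \sum p_i=1\}$. $h(P\|Q)=\frac12\sum_{i=1}^n(\sqrt{p_i}-\sqrt{q_i})^2$; $J(P\|Q)=\sum_{i=1}^n(p_i-q_i)\ln\frac{p_i}{q_i}$; $T(P\|Q)=\sum_{i=1}^n\frac{p_i+q_i}{2}\ln\frac{p_i+q_i}{2\sqrt{p_iq_i}}$. $D_{TJ}=T-\frac18J$, $D_{Th}=T-h$. *)

(* concrete reals R. Distributions P = (p_0,...,p_{n-1}) are
   represented as functions nat -> R, only indices 0..n-1 matter. *)
From Stdlib Require Import Reals List.
Open Scope R_scope.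

Definition sumn (n : nat) (f : nat -> R) : R :=
  fold_right Rplus 0 (map f (seq 0 n)).

Definition Gamma (n : nat) (p : nat -> R) : Prop :=
  (forall i, (i < n)%nat -> 0 < p i) /\ sumn n p = 1.

Definition hdiv (n : nat) (p q : nat -> R) : R :=
  / 2 * sumn n (fun i => (sqrt (p i) - sqrt (q i)) ^ 2).

Definition Jdiv (n : nat) (p q : nat -> R) : R :=
  sumn n (fun i => (p i - q i) * ln (p i / q i)).

Definition Tdiv (n : nat) (p q : nat -> R) : R :=
  sumn n (fun i => (p i + q i) / 2 * ln ((p i + q i) / (2 * sqrt (p i * q i)))).

Definition D_TJ (n : nat) (p q : nat -> R) : R := Tdiv n p q - / 8 * Jdiv n p q.
Definition D_Th (n : nat) (p q : nat -> R) : R := Tdiv n p q - hdiv n p q.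

(* Both divergences are sums of terms in (p_i, q_i) that are homogeneous of degree one,
   and the claim is 8 T + 16 h <= 3 J, so it suffices to show
   8 T_i + 8 (sqrt p_i - sqrt q_i)^2 <= 3 J_i for all p_i, q_i > 0.  Putting
   p_i = t^2 q_i, the gap 3 J_i - 8 T_i - 8 (sqrt p_i - sqrt q_i)^2 equals
   q_i (t^2 + 1) phi t, where phi 1 = 0 and phi' t = 24 t / (t^2 + 1)^2 * psi t with
   psi 1 = 0 and psi' t = (t - 1)^4 / (6 t^3) >= 0.  So psi, hence phi', has the sign
   of t - 1, and phi attains its minimum 0 at t = 1. *)

From Coquelicot Require Import Coquelicot.
From Stdlib Require Import Reals Lra Psatz List.
Open Scope R_scope.

Lemma derive_nonneg_le (f df : R -> R) (a b : R) : a <= b ->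
  (forall x, a <= x <= b -> is_derive f x (df x)) ->
  (forall x, a <= x <= b -> 0 <= df x) -> f a <= f b.
Proof.
  intros Hab Hd Hpos.
  destruct (MVT_gen f a b df) as [c [Hc Heq]].
  - intros x Hx. apply Hd. rewrite Rmin_left, Rmax_right in Hx by lra. lra.
  - intros x Hx. rewrite Rmin_left, Rmax_right in Hx by lra.
    apply continuity_pt_filterlim, (ex_derive_continuous (V := R_NormedModule)).
    exists (df x). apply Hd. lra.
  - rewrite Rmin_left, Rmax_right in Hc by lra.
    assert (0 <= df c) by (apply Hpos; lra). nra.
Qed.

Lemma derive_nonpos_ge (f df : R -> R) (a b : R) : a <= b ->
  (forall x, a <= x <= b -> is_derive f x (df x)) ->
  (forall x, a <= x <= b -> df x <= 0) -> f b <= f a.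
Proof.
  intros Hab Hd Hneg.
  enough (- f a <= - f b) by lra.
  apply (derive_nonneg_le (fun x => - f x) (fun x => - df x)); auto.
  - intros x Hx. apply (is_derive_opp (K := R_AbsRing) (V := R_NormedModule)), Hd, Hx.
  - intros x Hx. specialize (Hneg x Hx). lra.
Qed.

Definition psi (t : R) : R := ln t + (t ^ 4 - 8 * t ^ 3 + 8 * t - 1) / (12 * t ^ 2).

Definition phi (t : R) : R :=
  (10 * t ^ 2 - 2) / (t ^ 2 + 1) * ln t - 4 * ln ((1 + t ^ 2) / 2)
  - 8 * (t - 1) ^ 2 / (t ^ 2 + 1).

Lemma psi_1 : psi 1 = 0.
Proof. unfold psi. rewrite ln_1. field. Qed.

Lemma phi_1 : phi 1 = 0.
Proof.
  unfold phi. replace ((1 + 1 ^ 2) / 2) with 1 by field. rewrite ln_1. field.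
Qed.

Lemma is_derive_psi x : 0 < x -> is_derive psi x ((x - 1) ^ 4 / (6 * x ^ 3)).
Proof.
  intros Hx. unfold psi. auto_derive.
  - repeat split; nra.
  - field. lra.
Qed.

Lemma is_derive_phi x : 0 < x -> is_derive phi x (24 * x / (x ^ 2 + 1) ^ 2 * psi x).
Proof.
  intros Hx. unfold phi, psi. auto_derive.
  - repeat split; nra.
  - field. split; nra.
Qed.

Lemma psi_derivative_nonneg x : 0 < x -> 0 <= (x - 1) ^ 4 / (6 * x ^ 3).
Proof.
  intros Hx. apply Rdiv_le_0_compat.
  - replace ((x - 1) ^ 4) with (((x - 1) ^ 2) ^ 2) by ring. apply pow2_ge_0.
  - apply Rmult_lt_0_compat; [lra | apply pow_lt; lra].
Qed.

Lemma psi_le s t : 0 < s <= t -> psi s <= psi t.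
Proof.
  intros Hst.
  apply (derive_nonneg_le psi (fun x => (x - 1) ^ 4 / (6 * x ^ 3))); try lra.
  - intros x Hx. apply is_derive_psi. lra.
  - intros x Hx. apply psi_derivative_nonneg. lra.
Qed.

Lemma phi_ge0 t : 0 < t -> 0 <= phi t.
Proof.
  intros Ht. rewrite <- phi_1.
  assert (Hw : forall x, 0 < x -> 0 < 24 * x / (x ^ 2 + 1) ^ 2)
    by (intros x Hx; apply Rdiv_lt_0_compat; nra).
  destruct (Rle_dec 1 t).
  - apply (derive_nonneg_le phi (fun x => 24 * x / (x ^ 2 + 1) ^ 2 * psi x)); auto.
    + intros x Hx. apply is_derive_phi. lra.
    + intros x Hx. assert (0 <= psi x) by (rewrite <- psi_1; apply psi_le; lra).
      assert (0 < 24 * x / (x ^ 2 + 1) ^ 2) by (apply Hw; lra). nra.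
  - apply (derive_nonpos_ge phi (fun x => 24 * x / (x ^ 2 + 1) ^ 2 * psi x)); try lra.
    + intros x Hx. apply is_derive_phi. lra.
    + intros x Hx. assert (psi x <= 0) by (rewrite <- psi_1; apply psi_le; lra).
      assert (0 < 24 * x / (x ^ 2 + 1) ^ 2) by (apply Hw; lra). nra.
Qed.

Lemma sumn_le n f g : (forall i, (i < n)%nat -> f i <= g i) -> sumn n f <= sumn n g.
Proof.
  intros H. unfold sumn.
  assert (Hl : forall i, In i (seq 0 n) -> f i <= g i)
    by (intros i Hi; apply in_seq in Hi; apply H; lia).
  induction (seq 0 n) as [|i l IH]; simpl in *; [lra |].
  apply Rplus_le_compat; auto.
Qed.

Lemma sumn_add n f g : sumn n (fun i => f i + g i) = sumn n f + sumn n g.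
Proof. unfold sumn. induction (seq 0 n) as [|i l IH]; simpl; [ring | rewrite IH; ring]. Qed.

Lemma sumn_scal n c f : sumn n (fun i => c * f i) = c * sumn n f.
Proof. unfold sumn. induction (seq 0 n) as [|i l IH]; simpl; [ring | rewrite IH; ring]. Qed.

Lemma AG_hellinger_J_term_le a b : 0 < a -> 0 < b ->
  8 * ((a + b) / 2 * ln ((a + b) / (2 * sqrt (a * b)))) + 8 * (sqrt a - sqrt b) ^ 2
  <= 3 * ((a - b) * ln (a / b)).
Proof.
  intros Ha Hb.
  rewrite sqrt_mult by lra.
  set (x := sqrt a). set (y := sqrt b). set (t := x / y).
  assert (Hx : 0 < x) by (apply sqrt_lt_R0; lra).
  assert (Hy : 0 < y) by (apply sqrt_lt_R0; lra).
  assert (Ht : 0 < t) by (apply Rdiv_lt_0_compat; lra).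
  assert (Ea : a = (t * y) ^ 2) by (unfold t; rewrite <- (sqrt_sqrt a) by lra; fold x; field; lra).
  assert (Eb : b = y ^ 2) by (rewrite <- (sqrt_sqrt b) by lra; fold y; ring).
  assert (Ex : x = t * y) by (unfold t; field; lra).
  assert (Eratio : a / b = t * t) by (rewrite Ea, Eb; field; lra).
  assert (Emean : (a + b) / (2 * (x * y)) = ((1 + t ^ 2) / 2) / t)
    by (rewrite Ea, Eb, Ex; field; lra).
  rewrite Eratio, Emean, ln_mult, ln_div by nra.
  assert (Hgap : 3 * ((a - b) * (ln t + ln t))
                 - (8 * ((a + b) / 2 * (ln ((1 + t ^ 2) / 2) - ln t)) + 8 * (x - y) ^ 2)
                 = y ^ 2 * (t ^ 2 + 1) * phi t)
    by (rewrite Ea, Eb, Ex; unfold phi; field; nra).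
  assert (0 <= y ^ 2 * (t ^ 2 + 1) * phi t)
    by (apply Rmult_le_pos; [nra | apply phi_ge0; lra]).
  lra.
Qed.

Theorem proposition5p7 (n : nat) (p q : nat -> R) :
  (2 <= n)%nat -> Gamma n p -> Gamma n q ->
  D_TJ n p q <= 2 / 3 * D_Th n p q.
Proof.
  intros _ [Hp _] [Hq _].
  set (fT := fun i => (p i + q i) / 2 * ln ((p i + q i) / (2 * sqrt (p i * q i)))).
  set (fS := fun i => (sqrt (p i) - sqrt (q i)) ^ 2).
  set (fJ := fun i => (p i - q i) * ln (p i / q i)).
  assert (Hsum : sumn n (fun i => 8 * fT i + 8 * fS i) <= sumn n (fun i => 3 * fJ i))
    by (apply sumn_le; intros i Hi; apply AG_hellinger_J_term_le; auto).
  rewrite sumn_add, !sumn_scal in Hsum.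
  unfold D_TJ, D_Th, Tdiv, Jdiv, hdiv. fold fT fS fJ.
  lra.
Qed.
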